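(* For every integer $a\ge 4$, setting $N=\phi(a!)$, we have $\phi(a!)\,\phi((N-1)!)=\phi(N!)$. Consequently $c(a,N-1)\le N$ and $r(a,\phi(a!)-1)<1$ for all $a\ge 4$.
   Context: $\phi$ denotes Euler's totient function. For positive integers $a,b$, $c(a,b)$ is the least positive integer $c$ such that $\phi(a!)\,\phi(b!)$ divides $\phi(c!)$, and $r(a,b)=c(a,b)/(a+b)$. *)

From mathcomp Require Import all_boot all_order all_algebra.
Set Implicit Arguments. Unset Strict Implicit. Unset Printing Implicit Defensive.
Import Order.TTheory GRing.Theory Num.Theory.

Definition cdiv (a b c : nat) : bool :=
  totient a`! * totient b`! %| totient c`!.

Definition is_c (a b c : nat) : Prop :=
  0 < c /\ cdiv a b c /\ (forall c', 0 < c' -> cdiv a b c' -> c <= c').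

(* r(a,b) = c / (a+b), as a rational, given the value c = c(a,b). *)
Definition r_of (a b c : nat) : rat := (c%:R / (a + b)%:R)%R.

From mathcomp Require Import all_boot all_order all_algebra.
From mathcomp Require Import zify ring.
Import Order.TTheory GRing.Theory Num.Theory.

Set Implicit Arguments.
Unset Strict Implicit.
Unset Printing Implicit Defensive.

(* Multiplying n by a number m whose prime factors all divide n multiplies
   totient n by m.  Since 4 divides N = phi(a!) for a >= 4, N is
   composite, so its prime factors are below N and divide (N - 1)!; hence
   phi(N!) = phi(N (N - 1)!) = N phi((N - 1)!) = phi(a!) phi((N - 1)!).
   Thus N itself satisfies the divisibility defining c(a, N - 1). *)

Lemma dvdn_fact_fact m n : m <= n -> m`! %| n`!.
Proof.
elim: n => [|n IHn]; first by rewrite leqn0 => /eqP->.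
rewrite leq_eqVlt ltnS => /predU1P[-> // | /IHn m_n].
by rewrite factS dvdn_mull.
Qed.

Lemma pfactor_dvdn_totient p k n :
  prime p -> 0 < n -> p ^ k.+1 %| n -> p ^ k %| totient n.
Proof.
move=> p_pr n_gt0; rewrite pfactor_dvdn // => k_lt_e.
have [m p'm ->] := pfactor_coprime p_pr n_gt0.
rewrite totient_coprime 1?coprime_sym ?coprimeXl //.
rewrite totient_pfactor //; last exact: leq_ltn_trans k_lt_e.
by rewrite dvdn_mull // dvdn_mull // dvdn_exp2l // -ltnS (ltn_predK k_lt_e).
Qed.

Lemma totient_pmul p n : prime p -> p %| n -> totient (p * n) = p * totient n.
Proof.
move=> p_pr p_n; have [-> | n_gt0] := posnP n; first by rewrite muln0.
have [m p'm ->] := pfactor_coprime p_pr n_gt0.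
have e_gt0 : 0 < logn p n by rewrite -(pfactor_dvdn 1 p_pr n_gt0) expn1.
rewrite mulnCA -expnS !totient_coprime ?coprimeXr 1?coprime_sym //.
rewrite !totient_pfactor //= -{1}(prednK e_gt0) expnS.
ring.
Qed.

Lemma totient_mul_primes m n : 0 < n ->
  (forall p, prime p -> p %| m -> p %| n) -> totient (m * n) = m * totient n.
Proof.
move=> n_gt0; elim/ltn_ind: m => m IHm m_n.
have [m_le1 | m_gt1] := leqP m 1.
  by case: m m_le1 {IHm m_n} => [|[]] //; rewrite ?mul0n ?mul1n.
have [p p_pr p_m] := pdivP m_gt1.
have [k m_eq] : exists k, m = k * p by exists (m %/ p); rewrite divnK.
subst m.
have /andP[k_gt0 _] : (0 < k) && (0 < p) by rewrite -muln_gt0 ltnW.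
have k_lt : k < k * p by rewrite ltn_Pmulr ?prime_gt1.
rewrite [k * p]mulnC -mulnA totient_pmul ?(dvdn_mull _ (m_n _ p_pr p_m)) //.
by rewrite IHm ?mulnA // => q q_pr q_k; rewrite m_n ?dvdn_mulr.
Qed.

Lemma totient_fact_nonprime N : 0 < N -> ~~ prime N ->
  totient N`! = N * totient N.-1`!.
Proof.
move=> N_gt0 N'pr; rewrite -{1}(prednK N_gt0) factS (prednK N_gt0).
rewrite totient_mul_primes ?fact_gt0 // => p p_pr p_N.
rewrite dvdn_fact // prime_gt0 //= -ltnS (prednK N_gt0) ltn_neqAle.
rewrite dvdn_leq // andbT; apply: contraNneq N'pr => <-.
exact: p_pr.
Qed.

Lemma four_dvdn_totient_fact a : 4 <= a -> 4 %| totient a`!.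
Proof.
move=> a_ge4; apply: (@pfactor_dvdn_totient 2 2) => //; first exact: fact_gt0.
exact: dvdn_trans (dvdn_fact_fact a_ge4).
Qed.

Lemma nonprime_four_dvdn N : 4 %| N -> ~~ prime N.
Proof.
move=> N4; apply/negP => N_pr.
have /(prime_nt_dvdP N_pr) N2 : 2 %| N := dvdn_trans (isT : 2 %| 4) N4.
by move: N4; rewrite -N2.
Qed.

Lemma is_c_exists_le a b n : 0 < n -> cdiv a b n ->
  exists c, is_c a b c /\ c <= n.
Proof.
move=> n_gt0 n_div.
have ex_c : exists c, (0 < c) && cdiv a b c by exists n; rewrite n_gt0.
case: (ex_minnP ex_c) => c /andP[c_gt0 c_div] c_min.
exists c; split; last by apply: c_min; rewrite n_gt0.
split=> //; split=> // c' c'_gt0 c'_div.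
by apply: c_min; rewrite c'_gt0.
Qed.

Lemma r_of_lt1 a b c : c < a + b -> (r_of a b c < 1)%R.
Proof.
move=> c_lt; rewrite /r_of ltr_pdivrMr ?mul1r ?ltr_nat //.
by rewrite ltr0n (leq_ltn_trans _ c_lt).
Qed.

Theorem mainTheorem9 (a : nat) (ha : 4 <= a) :
  let N := totient a`! in
  totient a`! * totient (N - 1)`! = totient N`! /\
  exists c : nat, is_c a (N - 1) c /\ c <= N /\ (r_of a (N - 1) c < 1)%R.
Proof.
move=> N.
have N4 : 4 %| N by exact: four_dvdn_totient_fact.
have N_gt0 : 0 < N by rewrite totient_gt0 fact_gt0.
have phiN : totient a`! * totient (N - 1)`! = totient N`!.
  by rewrite [RHS]totient_fact_nonprime ?nonprime_four_dvdn // subn1.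
split=> //.
have [c [c_is c_le]] : exists c, is_c a (N - 1) c /\ c <= N.
  by apply: is_c_exists_le; rewrite // /cdiv phiN.
exists c; do 2!split=> //; apply: r_of_lt1.
by apply: leq_ltn_trans c_le _; lia.
Qed.
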